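(* Let $S$ be a finite set of states, $B\subseteq S$ a set of accepting states, and $P_\pi : S\times S\to[0,1]$ the (row-stochastic) transition matrix of the Markov chain induced on $S$ by a fixed memoryless policy $\pi$. Fix discount factors $0<\gamma_B<\gamma\le 1$ and define the surrogate reward $R(s)=1-\gamma_B$ and discount $\Gamma(s)=\gamma_B$ for $s\in B$, and $R(s)=0$, $\Gamma(s)=\gamma$ for $s\notin B$. For a path $\sigma=s_0s_1s_2\cdots$ of the chain let $G_t(\sigma)=\lim_{K\to\infty}\sum_{i=0}^{K}R(\sigma[t+i])\prod_{j=0}^{i-1}\Gamma(\sigma[t+j])$, and let $V(s)=\mathbb{E}[G_t(\sigma)\mid \sigma[t]=s]$ be the value function. Define iterates $U_{(k)}\in\mathbb{R}^S$ by $U_{(0)}=0$ and $$U_{(k+1)}(s)=R(s)+\Gamma(s)\sum_{s'\in S}P_\pi(s,s')\,U_{(k)}(s'),\qquad s\in S .$$ Then $U_{(k)}$ converges to $V$, and: (i) if $\gamma<1$, then $\|U_{(k)}-V\|_\infty\le \gamma^k\|V\|_\infty$ for all $k\ge 0$; (ii) if $\gamma=1$, then $\|U_{(k)}-V\|_\infty\le \big(1-(1-\gamma_B)\varepsilon^{n'}\big)^{\lfloor k/(n'+1)\rfloor}\|V\|_\infty$ for all $k\ge 0$, where $\varepsilon>0$ is any number with $P_\pi(s,s')\ge\varepsilon$ for all pairs $(s,s')$ with $P_\pi(s,s')>0$, and $n'=|\neg B_{T,A}|$ is the number of states that are not in $B$ and do not belong to any rejecting bottom strongly connected component.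
   Context: A strongly connected component (communicating class) of a finite Markov chain is a maximal set of states that all communicate with each other; a bottom strongly connected component (BSCC) is one with no transitions leaving it. A BSCC is called rejecting if it contains no state of $B$, and accepting otherwise. Let $\neg B_R$ denote the set of all states lying in rejecting BSCCs of the chain with transition matrix $P_\pi$, and $\neg B_{T,A}=S\setminus(B\cup\neg B_R)$. The setting arises from a Markov decision process with Büchi objective (visit $B$ infinitely often) under a fixed memoryless policy $\pi$, with $P_\pi(s,s')=P(s,\pi(s),s')$. *)

From HB Require Import structures.
From mathcomp Require Import all_boot all_order all_algebra.
From mathcomp Require Import all_classical all_reals all_analysis.
Set Implicit Arguments. Unset Strict Implicit. Unset Printing Implicit Defensive.
Import Order.TTheory GRing.Theory Num.Theory numFieldNormedType.Exports.
Local Open Scope ring_scope. Local Open Scope classical_set_scope.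

Section Surrogate.
Variables (R : realType) (S : finType) (P : S -> S -> R) (B : {set S}) (gB g : R).

Definition Rw (s : S) : R := if s \in B then 1 - gB else 0.
Definition Gam (s : S) : R := if s \in B then gB else g.

Fixpoint pathprob (s : S) (p : seq S) : R :=
  match p with [::] => 1 | x :: p' => P s x * pathprob x p' end.

(* truncated return  sum_{i=0}^{K} R(sigma_i) prod_{j<i} Gamma(sigma_j)
   of the path sigma = s :: p, K = size p *)
Fixpoint tret (s : S) (p : seq S) : R :=
  Rw s + Gam s * (match p with [::] => 0 | x :: p' => tret x p' end).

Definition exp_tret (K : nat) (s : S) : R :=
  \sum_(p : K.-tuple S) pathprob s p * tret s p.

Definition Vfun (s : S) : R := lim (exp_tret n s @[n --> \oo])%classic.

Fixpoint Uit (k : nat) : S -> R :=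
  match k with
  | 0 => fun _ => 0
  | k'.+1 => fun s => Rw s + Gam s * \sum_(s' : S) P s s' * Uit k' s'
  end.

Definition supnorm (x : S -> R) : R := \big[Num.max/0]_(s : S) `|x s|.

Definition edge : rel S := fun x y => 0 < P x y.

Definition comm_class (s : S) : {set S} :=
  [set t | connect edge s t && connect edge t s].

Definition closedb (C : {set S}) : bool :=
  [forall t in C, forall u, edge t u ==> (u \in C)].

(* states lying in rejecting bottom strongly connected components *)
Definition negB_R : {set S} :=
  [set s | [exists s0, [&& s \in comm_class s0, closedb (comm_class s0)
                          & [disjoint comm_class s0 & B]]]].

Definition negB_TA : {set S} := ~: (B :|: negB_R).

End Surrogate.

From Pilot Require Import Defs.
From HB Require Import structures.
From mathcomp Require Import all_boot all_order all_algebra.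
From mathcomp Require Import all_classical all_reals all_analysis.
Import Order.TTheory GRing.Theory Num.Theory numFieldNormedType.Exports.
From mathcomp Require Import ring lra.
Set Implicit Arguments. Unset Strict Implicit. Unset Printing Implicit Defensive.
Local Open Scope ring_scope.

(** Unfolding the expectation over paths shows that [U_(k+1)(s)] is the
    expected [k]-truncated return, so the iterates increase to [V], and [V]
    satisfies the Bellman equation [V = R + Γ P V].  Hence the error
    [e_k = V - U_k >= 0] obeys [e_(k+1)(s) = Γ(s) Σ_t P(s,t) e_k(t)], a
    contraction by [γ].  Neither bound needs [γ < 1] or [γ = 1]:
    [e_(k+1) <= γ_B ‖e_k‖] on [B], and [e_k] vanishes on rejecting BSCCs, where
    [U] and [V] are [0].  Every other state reaches one of these by a simple
    path through [¬B_{T,A}], hence within [n'] steps, each of probability at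
    least [ε]; averaging backwards along such a path, [‖e‖] shrinks by the
    factor [1 - (1 - γ_B) ε^n'] over every [n' + 1] iterations. *)

Section Reachability.
Variables (R : realType) (S : finType) (P : S -> S -> R) (B : {set S}).

Definition edge_TA : rel S := fun x y => edge P x y && (x \in negB_TA P B).

Lemma negB_R_closed s t : s \in negB_R P B -> 0 < P s t -> t \in negB_R P B.
Proof.
rewrite !inE => /existsP[s0 /and3P[hs hc hd]] hst.
apply/existsP; exists s0; rewrite hc hd andbT.
by move/forall_inP: hc => /(_ s hs)/forallP/(_ t)/implyP; rewrite andbT; apply.
Qed.

Lemma negB_R_notin_B s : s \in negB_R P B -> s \notin B.
Proof. by rewrite inE => /existsP[s0 /and3P[hs _ hd]]; rewrite (disjointFr hd hs). Qed.

Lemma notin_negB_TA s : (s \notin negB_TA P B) = (s \in B) || (s \in negB_R P B).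
Proof. by rewrite !inE negbK. Qed.

Lemma connect_edge_TA_edge x y : connect edge_TA x y -> connect (edge P) x y.
Proof. by apply: connect_sub => a b /andP[ab _]; apply: connect1. Qed.

Section AvoidingState.
Variable t : S.
Hypothesis avoid : forall u, connect edge_TA t u -> u \in negB_TA P B.

Lemma connect_edge_TA_avoid u : connect (edge P) t u -> connect edge_TA t u.
Proof.
have walk x p :
    connect edge_TA t x -> path (edge P) x p -> connect edge_TA t (last x p).
  elim: p x => [|y p IH] x tx //= /andP[xy pth].
  have xy_TA : edge_TA x y by rewrite /edge_TA xy avoid.
  exact: IH (connect_trans tx (connect1 xy_TA)) pth.
by case/connectP=> p pth ->; apply: walk (connect0 _ _) pth.
Qed.

(** The class of [t] is then a bottom SCC, rejecting because it avoids [B]. *)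
Lemma negB_R_avoid :
  (forall u, connect edge_TA t u -> connect edge_TA u t) -> t \in negB_R P B.
Proof.
move=> back; rewrite inE; apply/existsP; exists t; apply/and3P; split.
- by rewrite inE connect0.
- apply/forall_inP => v; rewrite inE => /andP[tv _].
  apply/forallP => w; apply/implyP => vw.
  have tw : connect (edge P) t w by apply: connect_trans tv (connect1 vw).
  by rewrite inE tw connect_edge_TA_edge // back // connect_edge_TA_avoid.
- rewrite disjoint_subset; apply/fintype.subsetP => v; rewrite inE => /andP[tv _].
  by have := avoid (connect_edge_TA_avoid tv); rewrite !inE negb_or => /andP[].
Qed.

End AvoidingState.

(** Pick [t] reachable from [s] with the fewest reachable states: everything
    reachable from [t] then reaches [t] back. *)
Lemma reach_notin_negB_TA s :
  exists2 w, w \notin negB_TA P B & connect edge_TA s w.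
Proof.
pose reach t := [set u | connect edge_TA t u].
case: (arg_minnP (fun t => #|reach t|) (connect0 edge_TA s)) => t st tmin.
have [|/existsPn avoid] :=
    boolP [exists u, connect edge_TA t u && (u \notin negB_TA P B)].
  by case/existsP=> u /andP[tu uW]; exists u => //; apply: connect_trans st tu.
have {}avoid u : connect edge_TA t u -> u \in negB_TA P B.
  by move=> tu; move: (avoid u); rewrite tu negbK.
have back u : connect edge_TA t u -> connect edge_TA u t.
  move=> tu; have sub : reach u \subset reach t.
    by apply/fintype.subsetP => v; rewrite !inE; apply: connect_trans tu.
  have eq_card : #|reach u| = #|reach t|.
    apply/eqP; rewrite eqn_leq subset_leq_card // tmin //.
    exact: connect_trans st tu.
  by have := subset_cardP eq_card sub => /(_ t); rewrite !inE connect0 => ->.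
have t_TA := avoid t (connect0 _ _).
by rewrite -[t \in _]negbK notin_negB_TA (negB_R_avoid avoid back) orbT in t_TA.
Qed.

Fixpoint reaches_within (j : nat) (s : S) : Prop :=
  match j with
  | 0 => s \notin negB_TA P B
  | j'.+1 => s \notin negB_TA P B \/ exists2 t, 0 < P s t & reaches_within j' t
  end.

Lemma reaches_within_mono j j' s :
  (j <= j')%N -> reaches_within j s -> reaches_within j' s.
Proof.
elim: j j' s => [|j IH] [|j'] s //= hj; first by left.
by case=> [|[t st rt]]; [left | right; exists t => //; apply: IH rt].
Qed.

Lemma reaches_within_path x p :
  path edge_TA x p -> last x p \notin negB_TA P B -> reaches_within (size p) x.
Proof.
elim: p x => [|y p IH] x //= /andP[/andP[xy _] pth] hl.
by right; exists y => //; apply: IH.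
Qed.

Lemma belast_path_edge_TA x p :
  path edge_TA x p -> {subset belast x p <= negB_TA P B}.
Proof.
elim: p x => [|y p IH] x //= /andP[/andP[_ xTA] pth] z.
by rewrite inE => /orP[/eqP -> //|]; apply: IH.
Qed.

Lemma reaches_within_card s : reaches_within #|negB_TA P B| s.
Proof.
case: (reach_notin_negB_TA s) => w wW /connectP[p pth ewp].
rewrite ewp in wW; case: (shortenP pth) wW => p' pth' up _ wW.
apply: reaches_within_mono (reaches_within_path pth' wW).
rewrite -(size_belast s) cardE; apply: uniq_leq_size.
  by move: up; rewrite lastI rcons_uniq => /andP[].
by move=> z /(belast_path_edge_TA pth'); rewrite mem_enum.
Qed.

End Reachability.

Section TupleSums.
Variables (V : nmodType) (T : finType).

Lemma sumr_tuple0 (f : seq T -> V) : \sum_(p : 0.-tuple T) f p = f [::].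
Proof.
rewrite (eq_bigr (fun _ => f [::])) => [|p _]; last by rewrite tuple0.
by rewrite sumr_const card_tuple expn0.
Qed.

Lemma sumr_tupleS K (f : seq T -> V) :
  \sum_(p : K.+1.-tuple T) f p = \sum_(x : T) \sum_(p : K.-tuple T) f (x :: p).
Proof.
rewrite pair_big /= (reindex (fun xp : T * K.-tuple T => [tuple of xp.1 :: xp.2])) //=.
apply: onW_bij; exists (fun t : K.+1.-tuple T => (thead t, [tuple of behead t])).
  by case=> x p /=; congr pair; apply: val_inj.
by move=> t /=; rewrite [RHS]tuple_eta; apply: val_inj.
Qed.

End TupleSums.

Section Stochastic.
Variables (R : realType) (S : finType) (P : S -> S -> R).
Hypothesis P_ge0 : forall s s', 0 <= P s s'.
Hypothesis P_sum1 : forall s, \sum_(s' : S) P s s' = 1.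

Lemma sum_pathprob K s : \sum_(p : K.-tuple S) pathprob P s p = 1.
Proof.
elim: K s => [|K IH] s; first by rewrite (sumr_tuple0 (pathprob P s)).
rewrite (sumr_tupleS K (pathprob P s)) /= -(P_sum1 s); apply: eq_bigr => x _.
by rewrite -mulr_sumr IH mulr1.
Qed.

Lemma P_le1 s t : P s t <= 1.
Proof. by rewrite -(P_sum1 s) (bigD1 t) //= lerDl sumr_ge0. Qed.

Lemma exists_pos_transition s : exists t, 0 < P s t.
Proof.
have [/existsP //|/existsPn P0] := boolP [exists t, 0 < P s t].
move: (P_sum1 s); rewrite big1 => [/eqP|t _]; first by rewrite eq_sym oner_eq0.
by apply/eqP; rewrite eq_le P_ge0 andbT leNgt P0.
Qed.

Lemma avg_le (x : S -> R) m s : (forall u, x u <= m) -> \sum_u P s u * x u <= m.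
Proof.
move=> xm; rewrite -[leRHS]mul1r -(P_sum1 s) mulr_suml.
by apply: ler_sum => u _; rewrite ler_wpM2l.
Qed.

Lemma avg_le_gap (x : S -> R) m a eps s t :
  (forall u, x u <= m) -> x t <= m - a -> 0 <= a -> eps <= P s t ->
  \sum_u P s u * x u <= m - eps * a.
Proof.
move=> xm xt a0 eps_t.
have gap : eps * a <= \sum_u P s u * (m - x u).
  rewrite (bigD1 t) //= -[leLHS]addr0; apply: lerD.
    apply: le_trans (_ : P s t * a <= _); first by rewrite ler_wpM2r.
    by rewrite ler_wpM2l //; lra.
  by apply: sumr_ge0 => u _; rewrite mulr_ge0 ?subr_ge0.
move: gap; under eq_bigr => u _ do rewrite mulrBr.
by rewrite sumrB -mulr_suml P_sum1 mul1r; lra.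
Qed.

End Stochastic.

Section SupNorm.
Variables (R : realType) (S : finType).

Lemma ler_supnorm (x : S -> R) s : `|x s| <= supnorm x.
Proof.
rewrite /supnorm; have := mem_index_enum s.
elim: (index_enum S) => [|a r IH] //; rewrite inE big_cons le_max.
by case/orP=> [/eqP ->|/IH ->]; rewrite ?lexx ?orbT.
Qed.

Lemma supnorm_ge0 (x : S -> R) : 0 <= supnorm x.
Proof. by apply: (big_ind (fun v => 0 <= v)) => // a b ha hb; rewrite le_max ha. Qed.

Lemma supnorm_le (x : S -> R) c : 0 <= c -> (forall s, `|x s| <= c) -> supnorm x <= c.
Proof.
move=> c0 h; apply: (big_ind (fun v => v <= c)) => // a b ha hb.
by rewrite ge_max ha hb.
Qed.

End SupNorm.

Local Open Scope classical_set_scope.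

Section ValueIteration.
Variables (R : realType) (S : finType) (P : S -> S -> R) (B : {set S}) (gB g : R).
Hypothesis P_ge0 : forall s s', 0 <= P s s'.
Hypothesis P_sum1 : forall s, \sum_(s' : S) P s s' = 1.
Hypothesis gB_gt0 : 0 < gB.
Hypothesis gB_lt_g : gB < g.
Hypothesis g_le1 : g <= 1.

Local Notation Rw := (Rw B gB).
Local Notation Gam := (Gam B gB g).
Local Notation U := (Uit P B gB g).
Local Notation V := (Vfun P B gB g).

Lemma gB_lt1 : gB < 1. Proof. exact: lt_le_trans gB_lt_g g_le1. Qed.

Lemma Rw_ge0 s : 0 <= Rw s.
Proof. by rewrite /Defs.Rw; case: ifP => // _; rewrite subr_ge0 ltW ?gB_lt1. Qed.

Lemma Gam_ge0 s : 0 <= Gam s.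
Proof. by rewrite /Defs.Gam; case: ifP => _; rewrite ltW // (lt_trans gB_gt0). Qed.

Lemma Gam_le_g s : Gam s <= g.
Proof. by rewrite /Defs.Gam; case: ifP => _ //; apply: ltW. Qed.

Lemma Gam_le1 s : Gam s <= 1.
Proof. exact: le_trans (Gam_le_g s) g_le1. Qed.

Lemma Rw_add_Gam_le1 s : Rw s + Gam s <= 1.
Proof. by rewrite /Defs.Rw /Defs.Gam; case: ifP => _; rewrite ?subrK ?add0r. Qed.

Lemma Uit_le1 k s : U k s <= 1.
Proof.
elim: k s => [|k IH] s //=; apply: le_trans (Rw_add_Gam_le1 s).
by rewrite lerD2l -[leRHS]mulr1 ler_wpM2l ?Gam_ge0 ?avg_le.
Qed.

Lemma Uit_leS k s : U k s <= U k.+1 s.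
Proof.
elim: k s => [|k IH] s /=.
  by rewrite big1 ?mulr0 ?addr0 ?Rw_ge0 // => t _; rewrite mulr0.
by rewrite lerD2l ler_wpM2l ?Gam_ge0 //; apply: ler_sum => t _; rewrite ler_wpM2l.
Qed.

Lemma exp_tretE K s : exp_tret P B gB g K s = U K.+1 s.
Proof.
rewrite /exp_tret; elim: K s => [|K IH] s.
  rewrite (sumr_tuple0 (fun p => pathprob P s p * tret B gB g s p)) /= mul1r.
  by rewrite big1 ?mulr0 // => t _; rewrite mulr0.
rewrite (sumr_tupleS K (fun p => pathprob P s p * tret B gB g s p)) /=.
under eq_bigr => x _ do under eq_bigr => p _ do
  rewrite mulrDr mulrA [_ * Rw s]mulrC -mulrA mulrA [_ * Gam s]mulrC -!mulrA.
under eq_bigr => x _ do rewrite big_split /= -!mulr_sumr sum_pathprob // mulr1.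
rewrite big_split /= -mulr_sumr P_sum1 mulr1 -mulr_sumr; congr (_ + _ * _).
by apply: eq_bigr => x _; rewrite IH.
Qed.

Lemma Uit_cvg s : U n s @[n --> \oo] --> V s.
Proof.
have nd : nondecreasing_seq (U^~ s) by apply/nondecreasing_seqP => n; apply: Uit_leS.
have ub : has_ubound (range (U^~ s)) by exists 1 => _ [n _ <-]; apply: Uit_le1.
have cvgU := nondecreasing_cvgn nd ub.
have cvgUS : U n.+1 s @[n --> \oo] --> sup (range (U^~ s)).
  by rewrite (cvg_shiftS (U^~ s)).
rewrite /Vfun (_ : exp_tret P B gB g ^~ s = fun n => U n.+1 s); last first.
  by apply: funext => n; apply: exp_tretE.
by rewrite (cvg_lim _ cvgUS).
Qed.

Lemma Vfun_Bellman s : V s = Rw s + Gam s * \sum_(t : S) P s t * V t.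
Proof.
have cvgUS : U n.+1 s @[n --> \oo] --> V s.
  by rewrite (cvg_shiftS (U^~ s)); apply: Uit_cvg.
have cvg_rhs : U n.+1 s @[n --> \oo] --> Rw s + Gam s * \sum_(t : S) P s t * V t.
  apply: cvgD; first exact: cvg_cst.
  apply: cvgM; first exact: cvg_cst.
  apply: cvg_big => //; first exact: add_continuous.
  by move=> t _; apply: cvgM; [exact: cvg_cst | exact: Uit_cvg].
exact: cvg_unique cvgUS cvg_rhs.
Qed.

Lemma Uit_le_Vfun k s : U k s <= V s.
Proof.
have nd : nondecreasing_seq (U^~ s) by apply/nondecreasing_seqP => n; apply: Uit_leS.
have := nondecreasing_cvgn_le nd (cvgP _ (Uit_cvg (s := s))) k.
by rewrite (cvg_lim _ (Uit_cvg (s := s))).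
Qed.

Lemma Uit_negB_R k s : s \in negB_R P B -> U k s = 0.
Proof.
elim: k s => [|k IH] s sR //=.
rewrite /Defs.Rw (negbTE (negB_R_notin_B sR)) add0r big1 ?mulr0 // => t _.
have := P_ge0 s t; rewrite le_eqVlt => /orP[/eqP <-|Pst]; first by rewrite mul0r.
by rewrite IH ?mulr0 // (negB_R_closed sR Pst).
Qed.

Lemma Vfun_negB_R s : s \in negB_R P B -> V s = 0.
Proof.
move=> sR; have U0 : U^~ s = fun=> 0 by apply: funext => n; rewrite Uit_negB_R.
have cvg0 : U n s @[n --> \oo] --> (0 : R) by rewrite U0; apply: cvg_cst.
exact: cvg_unique (Uit_cvg (s := s)) cvg0.
Qed.

Definition err k s := V s - U k s.
Definition err_norm k := supnorm (fun s => U k s - V s).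

Lemma err_ge0 k s : 0 <= err k s.
Proof. by rewrite subr_ge0 Uit_le_Vfun. Qed.

Lemma err_norm_ge0 k : 0 <= err_norm k.
Proof. exact: supnorm_ge0. Qed.

Lemma err_le_norm k s : err k s <= err_norm k.
Proof.
rewrite -[leLHS]ger0_norm ?err_ge0 // /err distrC.
exact: (ler_supnorm (fun s => U k s - V s)).
Qed.

Lemma err_norm_le k c : 0 <= c -> (forall s, err k s <= c) -> err_norm k <= c.
Proof.
move=> c0 h; apply: supnorm_le => // s.
by rewrite distrC ger0_norm; [apply: h | apply: err_ge0].
Qed.

Lemma errS k s : err k.+1 s = Gam s * \sum_(t : S) P s t * err k t.
Proof.
rewrite /err [U k.+1 s]/= {1}Vfun_Bellman.
under [in RHS]eq_bigr => t _ do rewrite mulrBr.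
by rewrite sumrB mulrBr opprD addrACA subrr add0r.
Qed.

Lemma err_negB_R k s : s \in negB_R P B -> err k s = 0.
Proof. by move=> sR; rewrite /err Vfun_negB_R // Uit_negB_R // subrr. Qed.

Lemma avg_err_ge0 k s : 0 <= \sum_(t : S) P s t * err k t.
Proof. by apply: sumr_ge0 => t _; rewrite mulr_ge0 ?err_ge0. Qed.

Lemma errS_le k s : err k.+1 s <= g * err_norm k.
Proof.
rewrite errS; apply: ler_pM; rewrite ?Gam_ge0 ?avg_err_ge0 ?Gam_le_g //.
by apply: avg_le => // t; apply: err_le_norm.
Qed.

Lemma err_normS k : err_norm k.+1 <= err_norm k.
Proof.
apply: err_norm_le => [|s]; first exact: err_norm_ge0.
apply: le_trans (errS_le k s) _.
by rewrite ler_piMl ?err_norm_ge0 ?(le_trans gB_gt0).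
Qed.

Lemma err_norm_nonincr k k' : (k <= k')%N -> err_norm k' <= err_norm k.
Proof.
move/subnKC <-; elim: (k' - k)%N => [|n IH]; first by rewrite addn0.
by rewrite addnS; apply: le_trans (err_normS _) IH.
Qed.

Lemma err_norm0 : err_norm 0 = supnorm V.
Proof. by apply: eq_bigr => s _ /=; rewrite sub0r normrN. Qed.

Lemma err_norm_geom k : err_norm k <= g ^+ k * supnorm V.
Proof.
rewrite -err_norm0; elim: k => [|k IH]; first by rewrite mul1r.
have g_ge0 : 0 <= g by rewrite ltW // (lt_trans gB_gt0).
apply: err_norm_le => [|s]; first by rewrite mulr_ge0 ?exprn_ge0 ?supnorm_ge0.
by apply: le_trans (errS_le k s) _; rewrite exprS -mulrA ler_wpM2l.
Qed.

Lemma errS_le_gB k s : s \notin negB_TA P B -> err k.+1 s <= err_norm k * gB.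
Proof.
rewrite notin_negB_TA => /orP[sB|sR]; last first.
  by rewrite err_negB_R // mulr_ge0 ?err_norm_ge0 ?ltW.
rewrite errS /Defs.Gam sB mulrC ler_wpM2r ?(ltW gB_gt0) //.
by apply: avg_le => // t; apply: err_le_norm.
Qed.

Section PositiveTransitions.
Variable eps : R.
Hypothesis eps_ge0 : 0 <= eps.
Hypothesis eps_le1 : eps <= 1.
Hypothesis eps_le_P : forall s s', 0 < P s s' -> eps <= P s s'.

Lemma err_reaches_within j k s : reaches_within P B j s ->
  err (k + j).+1 s <= err_norm k * (1 - (1 - gB) * eps ^+ j).
Proof.
have gB1 := gB_lt1.
elim: j k s => [|j IH] k s /=.
  by move=> /errS_le_gB; rewrite addn0 expr0 mulr1 subKr.
have /andP[ej_ge0 ej_le1] : 0 <= eps ^+ j.+1 <= 1 by rewrite exprn_ge0 ?exprn_ile1.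
have norm_ge0 := err_norm_ge0 k.
case=> [s_out|[t st rt]].
  apply: le_trans (errS_le_gB _ s_out) (le_trans (_ : _ <= err_norm k * gB) _).
    by rewrite ler_wpM2r ?(ltW gB_gt0) ?err_norm_nonincr ?leq_addr.
  by rewrite ler_wpM2l //; nra.
rewrite addnS errS; apply: le_trans (_ : \sum_u P s u * err (k + j).+1 u <= _).
  by rewrite -[leRHS]mul1r ler_wpM2r ?avg_err_ge0 ?Gam_le1.
have -> : err_norm k * (1 - (1 - gB) * eps ^+ j.+1)
    = err_norm k - eps * (err_norm k * (1 - gB) * eps ^+ j) by rewrite exprS; ring.
apply: (avg_le_gap P_ge0 P_sum1 _ _ _ (eps_le_P st)).
- by move=> u; rewrite (le_trans (err_le_norm _ _)) ?err_norm_nonincr // -addnS leq_addr.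
- by rewrite (le_trans (IH k t rt)) // mulrBr mulr1 mulrA.
- by rewrite !mulr_ge0 ?exprn_ge0 // subr_ge0 ltW.
Qed.

Local Notation rate := (1 - (1 - gB) * eps ^+ #|negB_TA P B|).

Lemma rate_ge0 : 0 <= rate.
Proof.
rewrite subr_ge0 -[leRHS]mulr1; apply: ler_pM; rewrite ?exprn_ge0 ?exprn_ile1 //.
  by rewrite subr_ge0 ltW ?gB_lt1.
by rewrite lerBlDr lerDl ltW.
Qed.

Lemma err_norm_block k : err_norm (k + #|negB_TA P B|.+1) <= rate * err_norm k.
Proof.
apply: err_norm_le => [|s]; first by rewrite mulr_ge0 ?rate_ge0 ?err_norm_ge0.
by rewrite addnS mulrC; apply: err_reaches_within; apply: reaches_within_card.
Qed.

Lemma err_norm_blocks k : err_norm k <= rate ^+ (k %/ #|negB_TA P B|.+1) * supnorm V.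
Proof.
apply: le_trans (err_norm_nonincr (leq_trunc_div k #|negB_TA P B|.+1)) _.
elim: (k %/ #|negB_TA P B|.+1)%N => [|q IH]; first by rewrite mul0n mul1r err_norm0.
rewrite mulSn addnC exprS -mulrA; apply: le_trans (err_norm_block _) _.
by rewrite ler_wpM2l ?rate_ge0.
Qed.

End PositiveTransitions.
End ValueIteration.

Theorem theorem1 (R : realType) (S : finType) (P : S -> S -> R) (B : {set S})
    (gB g : R) :
  (forall s s', 0 <= P s s') ->
  (forall s, \sum_(s' : S) P s s' = 1) ->
  0 < gB -> gB < g -> g <= 1 ->
  [/\ (forall s, Uit P B gB g k s @[k --> \oo] --> Vfun P B gB g s),
      (g < 1 -> forall k : nat,
         supnorm (fun s => Uit P B gB g k s - Vfun P B gB g s)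
           <= g ^+ k * supnorm (Vfun P B gB g))
    & (g = 1 -> forall eps : R, 0 < eps ->
         (forall s s', 0 < P s s' -> eps <= P s s') ->
         forall k : nat,
         supnorm (fun s => Uit P B gB g k s - Vfun P B gB g s)
           <= (1 - (1 - gB) * eps ^+ #|negB_TA P B|) ^+ (k %/ #|negB_TA P B|.+1)
              * supnorm (Vfun P B gB g))].
Proof.
move=> P_ge0 P_sum1 gB_gt0 gB_lt_g g_le1; split.
- by move=> s; apply: Uit_cvg.
- by move=> _ k; apply: err_norm_geom.
move=> _ eps eps_gt0 eps_le_P k.
have [s0 _|S0] := pickP (fun _ : S => true); last first.
  by rewrite /supnorm !big_pred0 // mulr0.
have [t Pst] := exists_pos_transition P_ge0 P_sum1 s0.
have eps_le1 : eps <= 1 by apply: le_trans (eps_le_P _ _ Pst) (P_le1 P_ge0 P_sum1 s0 t).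
exact: err_norm_blocks (ltW eps_gt0) eps_le1 eps_le_P k.
Qed.
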